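(* Let $V$ be a finite-dimensional vector space over $k$ with basis $\xi_1,\dots,\xi_n$, and let $W(V)$ be the Lie algebra of $k$-linear derivations of $k[\xi_1,\dots,\xi_n]=\mathrm{Sym}(V)$, with elements $f\partial_i$ and bracket $[f\partial_i,g\partial_j]=f\frac{\partial g}{\partial\xi_i}\partial_j-g\frac{\partial f}{\partial\xi_j}\partial_i$. Let $M$ be a vector space, $\mu:W(V)\otimes M\to M$ linear, and let $a:\mathrm{Sym}(V)\otimes M\to V\otimes M$ correspond to $\mu$ via $a(f\otimes x)=\sum_{i=1}^n\xi_i\otimes\mu(f\partial_i\otimes x)$. Then $\mu$ defines a representation of the Lie algebra $W(V)$ on $M$ if and only if $[a_1,a_2]=a'-a''$ as maps $\mathrm{Sym}(V)\otimes\mathrm{Sym}(V)\otimes M\to V\otimes V\otimes M$.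
   Context: Notation: $\tau$ denotes the symmetry swapping the first two tensor factors (of whatever type). $a_2=\mathrm{id}_{\mathrm{Sym}V}\otimes a$ and $a_1=\tau(\mathrm{id}\otimes a)\tau$, so that $a_1a_2$ and $a_2a_1$ are both maps $\mathrm{Sym}V\otimes\mathrm{Sym}V\otimes M\to V\otimes V\otimes M$, and $[a_1,a_2]=a_1a_2-a_2a_1$. $\Delta:\mathrm{Sym}V\to V\otimes\mathrm{Sym}V$ is $f\mapsto\sum_i\xi_i\otimes\partial f/\partial\xi_i$ and $m:\mathrm{Sym}V\otimes\mathrm{Sym}V\to\mathrm{Sym}V$ is multiplication. $a'$ is the composite $\mathrm{Sym}V\otimes\mathrm{Sym}V\otimes M\xrightarrow{\mathrm{id}\otimes\Delta\otimes\mathrm{id}}\mathrm{Sym}V\otimes V\otimes\mathrm{Sym}V\otimes M\xrightarrow{\tau\otimes\mathrm{id}\otimes\mathrm{id}}V\otimes\mathrm{Sym}V\otimes\mathrm{Sym}V\otimes M\xrightarrow{\mathrm{id}\otimes m\otimes\mathrm{id}}V\otimes\mathrm{Sym}V\otimes M\xrightarrow{\mathrm{id}\otimes a}V\otimes V\otimes M$, and $a''=\tau a'\tau$. A representation means $\mu([X,Y]\otimes x)=\mu(X\otimes\mu(Y\otimes x))-\mu(Y\otimes\mu(X\otimes x))$. *)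

From HB Require Import structures.
From mathcomp Require Import all_boot all_order all_algebra.
From mathcomp Require Import mpoly.
Set Implicit Arguments. Unset Strict Implicit. Unset Printing Implicit Defensive.
Import GRing.Theory.
Local Open Scope ring_scope.

(* V = k^n with basis xi_1..xi_n;  Sym V = {mpoly k[n]} (xi_i = 'X_i).
   W(V) = derivations of Sym V: a derivation sum_i f_i d_i is encoded by the
   finite function i |-> f_i. *)
Definition Wder (n : nat) (k : fieldType) := {ffun 'I_n -> {mpoly k[n]}}.

Definition fdi (n : nat) (k : fieldType) (f : {mpoly k[n]}) (i : 'I_n) : Wder n k :=
  [ffun j => if j == i then f else 0].

(* Lie bracket of derivations: [X,Y]_j = sum_i (X_i dY_j/dxi_i - Y_i dX_j/dxi_i);
   on f d_i, g d_j it gives f (dg/dxi_i) d_j - g (df/dxi_j) d_i. *)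
Definition Wbracket (n : nat) (k : fieldType) (X Y : Wder n k) : Wder n k :=
  [ffun j => \sum_(i < n) (X i * mderiv i (Y j) - Y i * mderiv i (X j))].

(* A linear map W(V) (x) M -> M is encoded as a k-bilinear map. *)
Definition bilinear_mu (n : nat) (k : fieldType) (M : lmodType k)
  (mu : Wder n k -> M -> M) : Prop :=
  (forall (c : k) X Y x, mu (c *: X + Y) x = c *: mu X x + mu Y x) /\
  (forall (c : k) X x y, mu X (c *: x + y) = c *: mu X x + mu X y).

Definition is_representation (n : nat) (k : fieldType) (M : lmodType k)
  (mu : Wder n k -> M -> M) : Prop :=
  forall X Y x, mu (Wbracket X Y) x = mu X (mu Y x) - mu Y (mu X x).

(* Tensors: V (x) M is identified with M^n via the basis xi_i
   (coordinate i of sum_i xi_i (x) m_i is m_i), and V (x) V (x) M with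
   functions 'I_n -> 'I_n -> M.  Linear maps out of Sym V (x) M, resp.
   Sym V (x) Sym V (x) M, are given by their values on pure tensors. *)

Definition a_of (n : nat) (k : fieldType) (M : lmodType k)
  (mu : Wder n k -> M -> M) (f : {mpoly k[n]}) (x : M) : 'I_n -> M :=
  fun i => mu (fdi f i) x.

Section Composites.
Variables (n : nat) (k : fieldType) (M : lmodType k) (mu : Wder n k -> M -> M).
Local Notation a := (a_of mu).

(* a_1 a_2 (f (x) g (x) x): a_2 gives sum_j f (x) xi_j (x) a(g,x)_j,
   then a_1 = tau (id (x) a) tau gives sum_{i,j} xi_i (x) xi_j (x) a(f, a(g,x)_j)_i *)
Definition a1a2 (f g : {mpoly k[n]}) (x : M) : 'I_n -> 'I_n -> M :=
  fun i j => a f (a g x j) i.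
Definition a2a1 (f g : {mpoly k[n]}) (x : M) : 'I_n -> 'I_n -> M :=
  fun i j => a g (a f x i) j.
Definition a_prime (f g : {mpoly k[n]}) (x : M) : 'I_n -> 'I_n -> M :=
  fun i j => a (f * mderiv i g) x j.
(* a'' = tau a' tau *)
Definition a_second (f g : {mpoly k[n]}) (x : M) : 'I_n -> 'I_n -> M :=
  fun i j => a_prime g f x j i.
End Composites.

From HB Require Import structures.
From mathcomp Require Import all_boot all_order all_algebra.
From mathcomp Require Import mpoly.
Set Implicit Arguments. Unset Strict Implicit. Unset Printing Implicit Defensive.
Import GRing.Theory.
Local Open Scope ring_scope.

(* Unfolding a, a' and a'', the identity [a_1, a_2] = a' - a'' at
   (f, g, x) and coordinates (i, j) is exactly the representation identity
   for the pair f d_i, g d_j, because a'(f, g, x)_{ij} - a''(f, g, x)_{ij} is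
   mu applied to f (dg/dxi_i) d_j - g (df/dxi_j) d_i = [f d_i, g d_j].  Both
   sides of the representation identity are biadditive in (X, Y), and every
   derivation is the sum of its components X_i d_i, so checking it on such
   pairs suffices. *)

Section WderStructure.
Variables (k : fieldType) (n : nat).
Implicit Types (X Y : Wder n k) (f g : {mpoly k[n]}).

Lemma Wder_sum_fdi X : X = \sum_(i < n) fdi (X i) i.
Proof.
apply/ffunP => j; rewrite sum_ffunE.
under eq_bigr do rewrite ffunE.
by rewrite -big_mkcond /= (big_pred1 j) // => i; rewrite /= eq_sym.
Qed.

Lemma Wbracket_antisym X Y : Wbracket Y X = - Wbracket X Y.
Proof.
apply/ffunP => j; rewrite !ffunE -sumrN.
by apply: eq_bigr => i _; rewrite opprB.
Qed.

Lemma Wbracket0l Y : Wbracket 0 Y = 0.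
Proof.
apply/ffunP => j; rewrite !ffunE big1 // => i _.
by rewrite !ffunE raddf0 mul0r mulr0 subrr.
Qed.

Lemma WbracketDl X X' Y :
  Wbracket (X + X') Y = Wbracket X Y + Wbracket X' Y.
Proof.
apply/ffunP => j; rewrite !ffunE -big_split /=.
apply: eq_bigr => i _; rewrite !ffunE raddfD mulrDl mulrDr.
by rewrite opprD addrACA.
Qed.

Lemma Wbracket_suml I (r : seq I) (P : pred I) (F : I -> Wder n k) Y :
  Wbracket (\sum_(i <- r | P i) F i) Y = \sum_(i <- r | P i) Wbracket (F i) Y.
Proof.
exact: (big_morph (fun X => Wbracket X Y) (fun X X' => WbracketDl X X' Y)
  (Wbracket0l Y)).
Qed.

Lemma Wbracket_sumr I (r : seq I) (P : pred I) (F : I -> Wder n k) X :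
  Wbracket X (\sum_(i <- r | P i) F i) = \sum_(i <- r | P i) Wbracket X (F i).
Proof.
rewrite Wbracket_antisym Wbracket_suml -sumrN.
by apply: eq_bigr => i _; rewrite Wbracket_antisym opprK.
Qed.

Lemma Wbracket_fdi f g i j :
  Wbracket (fdi f i) (fdi g j) = fdi (f * mderiv i g) j - fdi (g * mderiv j f) i.
Proof.
apply/ffunP => l; rewrite !ffunE.
under eq_bigr do rewrite !ffunE.
rewrite sumrB (bigD1 i) //= eqxx big1 ?addr0 => [|m /negbTE ->]; last first.
  by rewrite mul0r.
rewrite (bigD1 j) //= eqxx big1 ?addr0 => [|m /negbTE ->]; last first.
  by rewrite mul0r.
by case: eqP => _; case: eqP => _; rewrite ?mderiv0 ?mulr0 ?subr0 ?sub0r.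
Qed.

End WderStructure.

Section BilinearAction.
Variables (k : fieldType) (n : nat) (M : lmodType k) (mu : Wder n k -> M -> M).
Hypothesis mu_bilinear : bilinear_mu mu.

Lemma muBl X Y x : mu (X - Y) x = mu X x - mu Y x.
Proof.
case: mu_bilinear => mu_linl _; have := mu_linl (-1) Y X x.
by rewrite !scaleN1r [- Y + X]addrC [- mu Y x + _]addrC.
Qed.

Lemma mu0l x : mu 0 x = 0.
Proof. by rewrite -(subrr 0) muBl subrr. Qed.

Lemma muDl X Y x : mu (X + Y) x = mu X x + mu Y x.
Proof. by case: mu_bilinear => mu_linl _; have := mu_linl 1 X Y x; rewrite !scale1r. Qed.

Lemma muDr X x y : mu X (x + y) = mu X x + mu X y.
Proof. by case: mu_bilinear => _ mu_linr; have := mu_linr 1 X x y; rewrite !scale1r. Qed.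

Lemma mu0r X : mu X 0 = 0.
Proof.
case: mu_bilinear => _ mu_linr; have := mu_linr (-1) X 0 0.
by rewrite !scaleN1r oppr0 add0r addNr.
Qed.

Lemma mu_suml I (r : seq I) (P : pred I) (F : I -> Wder n k) x :
  mu (\sum_(i <- r | P i) F i) x = \sum_(i <- r | P i) mu (F i) x.
Proof. exact: (big_morph (mu^~ x) (fun X Y => muDl X Y x) (mu0l x)). Qed.

Lemma mu_sumr I (r : seq I) (P : pred I) (F : I -> M) X :
  mu X (\sum_(i <- r | P i) F i) = \sum_(i <- r | P i) mu X (F i).
Proof. exact: (big_morph (mu X) (muDr X) (mu0r X)). Qed.

Lemma is_representation_fdiP :
  is_representation mu <->
  (forall f g (x : M) i j,
     mu (Wbracket (fdi f i) (fdi g j)) x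
     = mu (fdi f i) (mu (fdi g j) x) - mu (fdi g j) (mu (fdi f i) x)).
Proof.
split=> [rep f g x i j | rep_fdi X Y x]; first exact: rep.
rewrite (Wder_sum_fdi X) (Wder_sum_fdi Y) Wbracket_suml !mu_suml.
under eq_bigr do rewrite Wbracket_sumr mu_suml.
under [S in _ = S - _]eq_bigr do rewrite mu_sumr.
under [S in _ = _ - S]eq_bigr do rewrite mu_sumr.
rewrite [S in _ = _ - S]exchange_big -sumrB.
by apply: eq_bigr => i _; rewrite -sumrB; apply: eq_bigr => j _; apply: rep_fdi.
Qed.

Lemma a_prime_sub_a_second f g x i j :
  a_prime mu f g x i j - a_second mu f g x i j
  = mu (Wbracket (fdi f i) (fdi g j)) x.
Proof. by rewrite Wbracket_fdi muBl. Qed.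

End BilinearAction.

Theorem proposition6p2 (k : fieldType) (n : nat) (M : lmodType k)
    (mu : Wder n k -> M -> M) :
  bilinear_mu mu ->
  (is_representation mu <->
   (forall (f g : {mpoly k[n]}) (x : M) (i j : 'I_n),
      a1a2 mu f g x i j - a2a1 mu f g x i j
      = a_prime mu f g x i j - a_second mu f g x i j)).
Proof.
move=> mu_bilinear; rewrite (is_representation_fdiP mu_bilinear).
split=> rep f g x i j.
  by rewrite a_prime_sub_a_second // rep.
by rewrite -a_prime_sub_a_second // -rep.
Qed.
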